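(* Let $G$ be a graph with maximum degree $\Delta\ge 1$ such that for every $i\in\{1,\ldots,\Delta\}$ there is a vertex of $G$ of degree $i$. Then $wr(G)\ge \log_3 \Delta$.
   Context: All graphs are finite, simple and undirected. For a set $E'$ of edges of a graph, the subgraph induced by $E'$ is the graph whose edge set is $E'$ and whose vertex set is the set of endpoints of edges in $E'$. A graph is weakly semiregular if there are two numbers $a,b$ (not necessarily distinct) such that the degree of every vertex is $a$ or $b$. The weakly semiregular number $wr(G)$ of a graph $G$ is the minimum number of subsets into which $E(G)$ can be partitioned so that the subgraph induced by each subset is weakly semiregular. *)

From mathcomp Require Import all_boot.
Set Implicit Arguments. Unset Strict Implicit. Unset Printing Implicit Defensive.

(* A finite simple graph: vertex type T : finType, adjacency e : rel T,
   assumed symmetric and irreflexive (hypotheses of the theorem). *)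

Definition deg (T : finType) (e : rel T) (x : T) : nat := #|[set y | e x y]|.

Definition maxdeg (T : finType) (e : rel T) : nat := \max_(x : T) deg e x.

(* Colour class i is the
   subset E_i = { {x,y} in E | c x y = i }; the classes partition E(G)
   (classes may be empty; empty classes are allowed, which does not change
   the minimum number of parts). *)
Definition edge_colouring (T : finType) (e : rel T) (k : nat)
  (c : T -> T -> 'I_k) : Prop :=
  forall x y, e x y -> c x y = c y x.

Definition cdeg (T : finType) (e : rel T) (k : nat) (c : T -> T -> 'I_k)
  (i : 'I_k) (x : T) : nat := #|[set y | e x y && (c x y == i)]|.

(* The subgraph induced by the edge set E_i has as vertices exactly the
   endpoints of edges of colour i, i.e. the x with cdeg > 0. It is weakly
   semiregular iff there are a, b with every such vertex of degree a or b. *)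
Definition weakly_semiregular_class (T : finType) (e : rel T) (k : nat)
  (c : T -> T -> 'I_k) (i : 'I_k) : Prop :=
  exists a b : nat, forall x : T, 0 < cdeg e c i x ->
    cdeg e c i x = a \/ cdeg e c i x = b.

Definition wr_partition (T : finType) (e : rel T) (k : nat) : Prop :=
  exists c : T -> T -> 'I_k, edge_colouring e c /\
    forall i : 'I_k, weakly_semiregular_class e c i.

From mathcomp Require Import all_boot.

Set Implicit Arguments. Unset Strict Implicit. Unset Printing Implicit Defensive.

(* In a weakly semiregular colour class every vertex has degree 0, a or b, so
   one of three symbols records its degree in that class. A vertex's symbols
   over all k classes determine its degree (the sum of the class degrees), so
   vertices of different degrees get different words in {0,1,2}^k. Since the
   degrees 1, ..., Delta all occur, Delta <= 3^k. *)

Lemma deg_sum_cdeg (T : finType) (e : rel T) (k : nat) (c : T -> T -> 'I_k)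
  (x : T) : deg e x = \sum_(i < k) cdeg e c i x.
Proof.
rewrite /deg /cdeg -sum1_card (partition_big (c x) predT) //=.
apply: eq_bigr => i _; rewrite -sum1_card.
by apply: eq_bigl => y; rewrite !inE.
Qed.

Lemma ternary_code_of_two_positive_values (T : Type) (f : T -> nat) (a b : nat) :
  (forall x, 0 < f x -> f x = a \/ f x = b) ->
  exists g : T -> 'I_3, forall x y, g x = g y -> f x = f y.
Proof.
move=> fab.
have fb x : f x != 0 -> f x != a -> f x = b.
  by rewrite -lt0n => /fab [->|//]; rewrite eqxx.
exists (fun x => inord (if f x == 0 then 0 else if f x == a then 1 else 2)).
move=> x y /(congr1 (@nat_of_ord 3)); rewrite !inordK; last 2 first.
- by case: ifP => //; case: ifP.
- by case: ifP => //; case: ifP.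
case: (eqVneq (f x) 0) => [->|x0]; case: (eqVneq (f y) 0) => [->|y0] //.
all: case: (eqVneq (f x) a) => [xa|xa]; case: (eqVneq (f y) a) => [ya|ya] //.
- by rewrite xa ya.
- by rewrite (fb x x0 xa) (fb y y0 ya).
Qed.

Lemma wr_partition_degree_signature (T : finType) (e : rel T) (k : nat) :
  wr_partition e k ->
  exists sig : T -> {ffun 'I_k -> 'I_3},
    forall x y, sig x = sig y -> deg e x = deg e y.
Proof.
move=> [c [_ semireg]].
have /fin_all_exists [g gP] : forall i : 'I_k, exists g : T -> 'I_3,
    forall x y, g x = g y -> cdeg e c i x = cdeg e c i y.
  by move=> i; have [a [b ab]] := semireg i;
     exact: ternary_code_of_two_positive_values ab.
exists (fun x => [ffun i => g i x]) => x y /ffunP sig_xy.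
rewrite !(deg_sum_cdeg _ c); apply: eq_bigr => i _.
by apply: gP; have := sig_xy i; rewrite !ffunE.
Qed.

Lemma leq_card_of_factored_range (T S : finType) (f : T -> nat) (g : T -> S)
  (n : nat) :
  (forall x y, g x = g y -> f x = f y) ->
  (forall i, 1 <= i <= n -> exists x, f x = i) ->
  n <= #|S|.
Proof.
move=> fg range_f.
have /fin_all_exists [x xP] : forall j : 'I_n, exists x, f x = j.+1.
  by move=> j; apply: range_f; rewrite ltn_ord.
have h_inj : injective (fun j => g (x j)).
  by move=> j1 j2 /fg; rewrite !xP => -[] /val_inj.
by have := leq_card _ h_inj; rewrite card_ord.
Qed.

Theorem mainTheorem4 (T : finType) (e : rel T)
  (e_sym : symmetric e) (e_irr : irreflexive e) :
  1 <= maxdeg e ->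
  (forall i, 1 <= i <= maxdeg e -> exists x : T, deg e x = i) ->
  forall k : nat, wr_partition e k -> maxdeg e <= 3 ^ k.
Proof.
move=> _ all_degrees k /wr_partition_degree_signature [sig sigP].
have := leq_card_of_factored_range sigP all_degrees.
by rewrite card_ffun !card_ord.
Qed.
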